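(* Let $G$ be a graph on $n$ vertices with $m$ edges, let $t\in\mathbb{N}$, and let $F_1,F_2$ be arbitrary graphs, with $r=|V(F_1)|$. Suppose $G$ does not contain the disjoint union $F_1\cup F_2$ as a subgraph. Then for any copy of $F_1$ in $G$, with vertex set $U$, there is a set of $t$ vertices of $U$ whose common neighbourhood in $V(G)\setminus U$ has size at least \[\frac{m'-(n-r)(t-1)}{r-t+1}\Big/\binom{r}{t},\qquad\text{where } m'=m-\mathrm{ex}(n-r,F_2)-\binom{r}{2}.\]
   Context: $\mathrm{ex}(n,F)$ is the maximum number of edges in a graph on $n$ vertices not containing $F$ as a (not necessarily induced) subgraph. $F_1\cup F_2$ denotes the vertex-disjoint union of $F_1$ and $F_2$. *)

From mathcomp Require Import all_boot all_order all_algebra.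
Set Implicit Arguments. Unset Strict Implicit. Unset Printing Implicit Defensive.

(* A (simple) graph is given by a finite vertex type and an adjacency relation;
   simplicity (symmetry, irreflexivity) is assumed explicitly where needed. *)

Definition contains (VG : finType) (eG : rel VG) (VF : finType) (eF : rel VF) : bool :=
  [exists f : {ffun VF -> VG},
     injectiveb f && [forall x, forall y, eF x y ==> eG (f x) (f y)]].

Definition edges (V : finType) (e : rel V) : {set {set V}} :=
  [set [set p.1; p.2] | p in [set p : V * V | e p.1 p.2]].

Definition nedges (V : finType) (e : rel V) : nat := #|edges e|.

(* simple graph on 'I_n encoded by a set of vertex sets E (only 2-sets count) *)
Definition adjE (n : nat) (E : {set {set 'I_n}}) : rel 'I_n :=
  fun x y => (x != y) && ([set x; y] \in E).

Definition ex (n : nat) (VF : finType) (eF : rel VF) : nat :=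
  \max_(E : {set {set 'I_n}} | ~~ contains (adjE E) eF) nedges (adjE E).

Definition union_rel (V1 V2 : finType) (e1 : rel V1) (e2 : rel V2) : rel (V1 + V2)%type :=
  fun a b => match a, b with
             | inl x, inl y => e1 x y
             | inr x, inr y => e2 x y
             | _, _ => false
             end.

Definition common_nbhd (V : finType) (e : rel V) (S W : {set V}) : {set V} :=
  [set v in W | [forall s in S, e s v]].

From mathcomp Require Import all_boot all_order all_algebra.
From mathcomp Require Import zify lra.
Import Order.TTheory GRing.Theory Num.Theory.
Set Implicit Arguments. Unset Strict Implicit. Unset Printing Implicit Defensive.

(* Fix a copy [U] of [F1] and let [W] be the remaining [n - r] vertices.  Every
   edge of [G] lies inside [U] (at most [C(r, 2)] of them), inside [W] (at most
   [ex(n - r, F2)] of them, since [G[W]] is [F2]-free), or joins some [v] in [W]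
   to one of its [d(v)] neighbours in [U].  Counting the [t]-subsets of [U]
   lying in a common neighbourhood gives [sum_v C(d(v), t)], and the
   bound [d + 1 <= (r - t + 1) C(d, t) + t] turns the edge count into a lower
   bound on this sum; one of the [C(r, t)] subsets receives at least the
   average share. *)

Lemma nedges_eq (V : finType) (e e' : rel V) : e =2 e' -> nedges e = nedges e'.
Proof.
move=> ee'; rewrite /nedges /edges.
suff -> : [set p : V * V | e p.1 p.2] = [set p | e' p.1 p.2] by [].
by apply/setP=> p; rewrite !inE ee'.
Qed.

Lemma contains_eq (V : finType) (e e' : rel V) (VF : finType) (eF : rel VF) :
  e =2 e' -> contains e eF = contains e' eF.
Proof.
move=> ee'; apply: eq_existsb => g; congr andb.
by apply: eq_forallb => x; apply: eq_forallb => y; rewrite !ee'.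
Qed.

Lemma card_set_in_cond (T : finType) (A : {pred T}) (P : pred T) :
  #|[set x in A | P x]| = \sum_(x in A) P x.
Proof.
rewrite -sum1_card (eq_bigl (fun x => (x \in A) && P x)) => [|x]; last by rewrite inE.
by rewrite big_mkcondr; apply: eq_bigr => x _; case: (P x).
Qed.

Lemma card_bigcup_le (I T : finType) (P : pred I) (A : I -> {set T}) :
  #|\bigcup_(i | P i) A i| <= \sum_(i | P i) #|A i|.
Proof.
apply: (big_rec2 (fun (X : {set T}) k => #|X| <= k)); first by rewrite cards0.
by move=> i X k _ leXk; rewrite (leq_trans (leq_card_setU _ _).1) ?leq_add2l.
Qed.

Lemma exists_ge_average (I : finType) (A : {set I}) (F : I -> nat) :
  A != set0 -> exists2 i, i \in A & \sum_(j in A) F j <= #|A| * F i.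
Proof.
rewrite -card_gt0 => A_gt0; have [i Ai maxF] := eq_bigmax_cond F A_gt0.
exists i => //; rewrite -maxF -sum_nat_const.
by apply: leq_sum => j Aj; apply: leq_bigmax_cond.
Qed.

Lemma ltn_bin_affine d r t :
  d <= r -> t <= r -> d < (r.+1 - t) * 'C(d, t) + t.
Proof.
move=> le_dr le_tr; case: (ltnP d t) => [lt_dt | le_td]; first exact: ltn_addl.
have : 0 < 'C(d, t) by rewrite bin_gt0.
nia.
Qed.

Lemma adjE_edges n (e : rel 'I_n) :
  symmetric e -> irreflexive e -> adjE (edges e) =2 e.
Proof.
move=> e_sym e_irr x y; rewrite /adjE /edges; apply/andP/idP.
- case=> neq_xy /imsetP [[p1 p2]]; rewrite inE /= => ep Exy.
  move: neq_xy; have : x \in [set p1; p2] by rewrite -Exy set21.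
  have : y \in [set p1; p2] by rewrite -Exy set22.
  rewrite !inE => /orP[/eqP-> | /eqP->] /orP[/eqP-> | /eqP->];
    by rewrite ?eqxx // e_sym.
- move=> exy; split; first by apply: contraTneq exy => ->; rewrite e_irr.
  by apply/imsetP; exists (x, y); rewrite ?inE.
Qed.

Lemma nedges_le_ex n (e : rel 'I_n) (VF : finType) (eF : rel VF) :
  symmetric e -> irreflexive e -> ~~ contains e eF -> nedges e <= ex n eF.
Proof.
move=> e_sym e_irr e_free; have eE := adjE_edges e_sym e_irr.
rewrite -(nedges_eq eE).
apply: (leq_bigmax_cond (P := fun E => ~~ contains (adjE E) eF)).
by rewrite (contains_eq _ eE).
Qed.

Lemma nedges_pullback (V' V : finType) (h : V' -> V) (e : rel V) :
  injective h ->
  nedges [rel x y | e (h x) (h y)] = #|[set B in edges e | B \subset h @: setT]|.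
Proof.
move=> h_inj; rewrite /nedges -(card_imset _ (imset_inj h_inj)).
have imset2 x y : h @: [set x; y] = [set h x; h y] by rewrite imsetU1 imset_set1.
apply: eq_card => B; apply/imsetP/setIdP.
- case=> B' /imsetP [[x y]]; rewrite inE /= => exy -> ->; rewrite imset2; split.
    by apply/imsetP; exists (h x, h y); rewrite ?inE.
  by apply/subsetP => z; rewrite !inE => /orP[] /eqP->; apply: imset_f.
- case=> /imsetP [[x y]]; rewrite inE /= => exy -> sub_xy.
  have /imsetP [i _ Ei] := subsetP sub_xy x (set21 x y).
  have /imsetP [j _ Ej] := subsetP sub_xy y (set22 _ y).
  rewrite {}Ei {}Ej in exy *.
  by exists [set i; j]; rewrite ?imset2 //; apply/imsetP; exists (i, j); rewrite ?inE.
Qed.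

Lemma imset_enum_val (T : finType) (A : {set T}) :
  (@enum_val T (mem A)) @: setT = A.
Proof.
apply/setP => x; apply/imsetP/idP => [[i _ ->] | Ax]; first exact: enum_valP.
by exists (enum_rank_in Ax x); rewrite ?enum_rankK_in.
Qed.

Section Graph.

Variables (V : finType) (e : rel V).
Hypotheses (e_sym : symmetric e) (e_irr : irreflexive e).

(* [G[W]], relabelled onto ['I_#|W|], the vertex type over which [ex] ranges. *)
Definition induced (W : {set V}) : rel 'I_#|W| :=
  [rel i j | e (enum_val i) (enum_val j)].
Arguments induced : clear implicits.

Definition edges_within (W : {set V}) : {set {set V}} :=
  [set B in edges e | B \subset W].

Definition nbhd_in (U : {set V}) (v : V) : {set V} := [set u in U | e u v].

Lemma card_edges_within_le_ex (W : {set V}) (VF : finType) (eF : rel VF) :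
  ~~ contains (induced W) eF -> #|edges_within W| <= ex #|W| eF.
Proof.
move=> free; have -> : edges_within W =
    [set B in edges e | B \subset (@enum_val _ (mem W)) @: setT].
  by rewrite imset_enum_val.
rewrite -nedges_pullback; last exact: enum_val_inj.
by apply: nedges_le_ex => // [i j | i] /=; [apply: e_sym | apply: e_irr].
Qed.

Lemma contains_union (V1 V2 : finType) (e1 : rel V1) (e2 : rel V2)
    (f : V1 -> V) (g : V2 -> V) :
  injective f -> injective g ->
  (forall x y, e1 x y -> e (f x) (f y)) -> (forall x y, e2 x y -> e (g x) (g y)) ->
  (forall x y, f x != g y) -> contains e (union_rel e1 e2).
Proof.
move=> f_inj g_inj f_hom g_hom fg_disj; apply/existsP.
exists [ffun a => match a with inl x => f x | inr y => g y end]; apply/andP; split.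
- apply/injectiveP => [[a|a] [b|b]]; rewrite !ffunE => fab.
  + by rewrite (f_inj _ _ fab).
  + by move: (fg_disj a b); rewrite fab eqxx.
  + by move: (fg_disj b a); rewrite fab eqxx.
  + by rewrite (g_inj _ _ fab).
- by apply/forallP => [[a|a]]; apply/forallP => [[b|b]];
    rewrite !ffunE //=; apply/implyP; [exact: f_hom | exact: g_hom].
Qed.

Lemma free_induced_compl (V1 V2 : finType) (e1 : rel V1) (e2 : rel V2)
    (f : V1 -> V) :
  injective f -> (forall x y, e1 x y -> e (f x) (f y)) ->
  ~~ contains e (union_rel e1 e2) -> ~~ contains (induced (~: (f @: setT))) e2.
Proof.
move=> f_inj f_hom; apply: contra => /existsP [g /andP [/injectiveP g_inj g_hom]].
apply: (contains_union f_inj (g := fun y => enum_val (g y))) => //.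
- by move=> x y /enum_val_inj /g_inj.
- by move=> x y e2xy; move/forallP/(_ x)/forallP/(_ y)/implyP: g_hom; apply.
- move=> x y; have := enum_valP (g y); rewrite inE.
  by apply: contraNneq => <-; apply: imset_f.
Qed.

Lemma nedges_le_split (U : {set V}) :
  nedges e <= 'C(#|U|, 2) + #|edges_within (~: U)|
              + \sum_(v in ~: U) #|nbhd_in U v|.
Proof.
pose cross := \bigcup_(v in ~: U) [set [set u; v] | u in nbhd_in U v].
have : edges e \subset
    [set B : {set V} | B \subset U & #|B| == 2] :|: edges_within (~: U) :|: cross.
  apply/subsetP => B /imsetP [[x y]]; rewrite inE /= => exy ->.
  have neq_xy : x != y by apply: contraTneq exy => ->; rewrite e_irr.
  have exyE : [set x; y] \in edges e by apply/imsetP; exists (x, y); rewrite ?inE.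
  rewrite !inE; case: (boolP (x \in U)) => xU; case: (boolP (y \in U)) => yU.
  - rewrite cards2 neq_xy andbT; apply/orP; left; apply/orP; left.
    by apply/subsetP => z; rewrite !inE => /orP[] /eqP->.
  - apply/orP; right; apply/bigcupP; exists y; rewrite ?inE //.
    by apply/imsetP; exists x; rewrite ?inE ?xU.
  - apply/orP; right; apply/bigcupP; exists x; rewrite ?inE //.
    by apply/imsetP; exists y; [rewrite inE yU e_sym | rewrite setUC].
  - apply/orP; left; apply/orP; right; rewrite exyE /=.
    by apply/subsetP => z; rewrite !inE => /orP[] /eqP->.
move=> /subset_leq_card /leq_trans; apply.
rewrite (leq_trans (leq_card_setU _ _).1) // leq_add //.
  by rewrite (leq_trans (leq_card_setU _ _).1) // cards_draws.
rewrite (leq_trans (card_bigcup_le _ _)) //.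
by apply: leq_sum => v _; apply: leq_imset_card.
Qed.

Lemma sum_card_common_nbhd (U W : {set V}) t :
  \sum_(S in [set S : {set V} | S \subset U & #|S| == t]) #|common_nbhd e S W|
  = \sum_(v in W) 'C(#|nbhd_in U v|, t).
Proof.
have cnE S : S \in [set S : {set V} | S \subset U & #|S| == t] ->
    #|common_nbhd e S W| = \sum_(v in W) (S \subset nbhd_in U v).
  rewrite inE => /andP [SU _]; rewrite /common_nbhd card_set_in_cond.
  apply: eq_bigr => v _; congr nat_of_bool.
  apply/forallP/subsetP => [Se u uS | SN u].
    by rewrite inE (subsetP SU) ?(implyP (Se u)).
  by apply/implyP => /SN; rewrite inE => /andP[].
rewrite (eq_bigr _ cnE) exchange_big; apply: eq_bigr => v _.
rewrite -(cards_draws (nbhd_in U v)) -card_set_in_cond; apply: eq_card => S; rewrite !inE.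
case: (boolP (S \subset nbhd_in U v)) => SN; rewrite ?andbT ?andbF //.
by rewrite (subset_trans SN) //; apply/subsetP => u; rewrite inE => /andP[].
Qed.

Lemma sum_nbhd_le_sum_bin (U W : {set V}) t : t <= #|U| ->
  \sum_(v in W) #|nbhd_in U v| + #|W|
  <= (#|U|.+1 - t) * \sum_(v in W) 'C(#|nbhd_in U v|, t) + t * #|W|.
Proof.
move=> le_tU; rewrite [t * _]mulnC -sum_nat_const -sum1_card big_distrr -!big_split.
apply: leq_sum => v _; rewrite /= addn1; apply: ltn_bin_affine => //.
by apply: subset_leq_card; apply/subsetP => u; rewrite inE => /andP[].
Qed.

End Graph.

Lemma le_quotient_of_count (m a b w c r t B : nat) : t <= r -> 0 < B ->
  m + w <= a + b + (r.+1 - t) * (B * c) + t * w ->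
  ((((m%:Q - a%:Q - b%:Q) - w%:Q * (t%:Q - 1)) / (r%:Q - t%:Q + 1)) / B%:Q
    <= c%:Q)%R.
Proof.
move=> le_tr B_gt0.
rewrite -(ler_nat rat) !natrD !natrM natrB ?(leqW le_tr) // -addn1 natrD => bound.
have rt_pos : (0 < r%:Q - t%:Q + 1)%R.
  have : (t%:Q <= r%:Q)%R by rewrite ler_nat.
  lra.
rewrite ler_pdivrMr ?ltr0n // ler_pdivrMr //.
nra.
Qed.

Theorem mainTheorem5
  (V : finType) (e : rel V) (V1 : finType) (e1 : rel V1) (V2 : finType) (e2 : rel V2)
  (t : nat)
  (e_sym : symmetric e) (e_irr : irreflexive e)
  (e1_sym : symmetric e1) (e1_irr : irreflexive e1)
  (e2_sym : symmetric e2) (e2_irr : irreflexive e2)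
  (ht : t <= #|V1|)
  (hfree : ~~ contains e (union_rel e1 e2))
  (f : {ffun V1 -> V}) (f_inj : injective f)
  (f_hom : forall x y, e1 x y -> e (f x) (f y)) :
  let n := #|V| in let r := #|V1| in let m := nedges e in
  let U := f @: [set: V1] in
  let m' : rat := (m%:Q - (ex (n - r) e2)%:Q - ('C(r, 2))%:Q)%R in
  exists S : {set V}, [/\ S \subset U, #|S| = t &
    ((((m' - (n - r)%N%:Q * (t%:Q - 1)) / (r%:Q - t%:Q + 1)) / ('C(r, t))%:Q)
       <= (#|common_nbhd e S (~: U)|)%:Q)%R].
Proof.
move=> n r m U m'.
have cardU : #|U| = r by rewrite card_imset // cardsT.
have cardW : #|~: U| = n - r by rewrite cardsCs setCK cardU.
pose T := [set S : {set V} | S \subset U & #|S| == t].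
have T_neq0 : T != set0 by rewrite -card_gt0 cards_draws cardU bin_gt0.
have [S TS avg] := exists_ge_average (fun S => #|common_nbhd e S (~: U)|) T_neq0.
move: TS avg; rewrite inE sum_card_common_nbhd cards_draws cardU => /andP [SU /eqP cardS] avg.
exists S; split => //.
apply: (le_quotient_of_count ht); first by rewrite bin_gt0.
have := nedges_le_split e_sym e_irr U.
have := card_edges_within_le_ex e_sym e_irr (free_induced_compl f_inj f_hom hfree).
have := sum_nbhd_le_sum_bin e (~: U) (leq_trans ht (eq_leq (esym cardU))).
have := leq_mul (leqnn (r.+1 - t)) avg.
rewrite -/U cardU cardW => avg' deg within edges_split.
lia.
Qed.
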